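(* Consider the dispersionless Kadomtsev–Petviashvili (dKP) equation written as the two-component first-order system $$u_t=uu_x+w_y,\qquad u_y=w_x$$ for $u(x,y,t)$, $w(x,y,t)$. Two-phase solutions of this system, i.e. solutions for which $(u,w)$ satisfy a pair of commuting two-component hydrodynamic-type systems $(u,w)^T_t=A(u,w)(u,w)^T_x$, $(u,w)^T_y=B(u,w)(u,w)^T_x$ (compatible with the dKP system) and are given implicitly by the generalised hodograph formula $x\,I+t\,A(u,w)+y\,B(u,w)=C(u,w)$, where $(u,w)^T_\tau=C(u,w)(u,w)^T_x$ is a further flow commuting with both, are given by the implicit formulae $$x+(z_u+u)t=m_u,\qquad y+z_w t=m_w,$$ where the functions $z(u,w)$ and $m(u,w)$ satisfy the PDEs $$z_{uu}+z_wz_{uw}-z_uz_{ww}+1=0,\qquad m_{uu}+z_wm_{uw}-z_um_{ww}=0 .$$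
   Context: Subscripts denote partial derivatives. $I$ is the $2\times 2$ identity matrix. Two-phase solutions are the solutions obtained from two-component hydrodynamic reductions, with the general solution of such a reduction given by Tsarev's generalised hodograph formula as described in the claim. *)

From Stdlib Require Import Reals.
From Coquelicot Require Import Coquelicot.
Open Scope R_scope.

Definition d_u (f : R -> R -> R) (u w : R) : R := Derive (fun s => f s w) u.
Definition d_w (f : R -> R -> R) (u w : R) : R := Derive (fun s => f u s) w.
Definition d_x (f : R -> R -> R -> R) (x y t : R) : R := Derive (fun s => f s y t) x.
Definition d_y (f : R -> R -> R -> R) (x y t : R) : R := Derive (fun s => f x s t) y.
Definition d_t (f : R -> R -> R -> R) (x y t : R) : R := Derive (fun s => f x y s) t.

Definition open2 (D : R -> R -> Prop) : Prop :=
  forall u w, D u w -> exists e, 0 < e /\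
    forall u' w', Rabs (u' - u) < e -> Rabs (w' - w) < e -> D u' w'.
Definition convex2 (D : R -> R -> Prop) : Prop :=
  forall u1 w1 u2 w2 s, D u1 w1 -> D u2 w2 -> 0 <= s <= 1 ->
    D ((1 - s) * u1 + s * u2) ((1 - s) * w1 + s * w2).
Definition open3 (O : R -> R -> R -> Prop) : Prop :=
  forall x y t, O x y t -> exists e, 0 < e /\
    forall x' y' t', Rabs (x' - x) < e -> Rabs (y' - y) < e -> Rabs (t' - t) < e ->
      O x' y' t'.

Record M2 := mkM2 { e11 : R; e12 : R; e21 : R; e22 : R }.

Definition mmul (P Q : M2) : M2 :=
  mkM2 (e11 P * e11 Q + e12 P * e21 Q) (e11 P * e12 Q + e12 P * e22 Q)
       (e21 P * e11 Q + e22 P * e21 Q) (e21 P * e12 Q + e22 P * e22 Q).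

Definition mapp (P : M2) (v : R * R) : R * R :=
  (e11 P * fst v + e12 P * snd v, e21 P * fst v + e22 P * snd v).

Definition vadd (v v' : R * R) : R * R := (fst v + fst v', snd v + snd v').

Definition Mfield := R -> R -> M2.

Definition ddir (A : Mfield) (u w : R) (eta : R * R) : M2 :=
  let dd (f : M2 -> R) := fst eta * d_u (fun a b => f (A a b)) u w
                        + snd eta * d_w (fun a b => f (A a b)) u w in
  mkM2 (dd e11) (dd e12) (dd e21) (dd e22).

Definition C1on (D : R -> R -> Prop) (f : R -> R -> R) : Prop :=
  forall u w, D u w ->
    ex_derive (fun s => f s w) u /\ ex_derive (fun s => f u s) w /\
    continuity_2d_pt f u w /\
    continuity_2d_pt (d_u f) u w /\ continuity_2d_pt (d_w f) u w.

Definition C1field (D : R -> R -> Prop) (A : Mfield) : Prop :=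
  C1on D (fun u w => e11 (A u w)) /\ C1on D (fun u w => e12 (A u w)) /\
  C1on D (fun u w => e21 (A u w)) /\ C1on D (fun u w => e22 (A u w)).

(* The hydrodynamic-type flows U_t = A(U) U_x and U_tau = C(U) U_x commute
   (U_{t tau} = U_{tau t} identically, i.e. for arbitrary U_x = xi and U_xx):
     A C = C A   and   A'[C xi] xi + A C'[xi] xi = C'[A xi] xi + C A'[xi] xi. *)
Definition commuting (D : R -> R -> Prop) (A C : Mfield) : Prop :=
  forall u w, D u w ->
    mmul (A u w) (C u w) = mmul (C u w) (A u w) /\
    forall xi : R * R,
      vadd (mapp (ddir A u w (mapp (C u w) xi)) xi)
           (mapp (A u w) (mapp (ddir C u w xi) xi))
      = vadd (mapp (ddir C u w (mapp (A u w) xi)) xi)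
             (mapp (C u w) (mapp (ddir A u w xi) xi)).

(* The pair U_t = A U_x, U_y = B U_x is a reduction of (compatible with) the
   dKP system u_t = u u_x + w_y, u_y = w_x, i.e. every solution of the pair
   solves dKP: first row of B is (0,1), first row of A is (u + B21, B22). *)
Definition dKP_compatible (D : R -> R -> Prop) (A B : Mfield) : Prop :=
  forall u w, D u w ->
    e11 (B u w) = 0 /\ e12 (B u w) = 1 /\
    e11 (A u w) = u + e21 (B u w) /\ e12 (A u w) = e22 (B u w).

Definition dKP_solution (O : R -> R -> R -> Prop) (u w : R -> R -> R -> R) : Prop :=
  forall x y t, O x y t ->
    (ex_derive (fun s => u s y t) x /\ ex_derive (fun s => u x s t) y /\
     ex_derive (fun s => u x y s) t /\
     ex_derive (fun s => w s y t) x /\ ex_derive (fun s => w x s t) y /\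
     ex_derive (fun s => w x y s) t) /\
    d_t u x y t = u x y t * d_x u x y t + d_y w x y t /\
    d_y u x y t = d_x w x y t.

Definition hydro_flow (O : R -> R -> R -> Prop) (u w : R -> R -> R -> R)
    (ds : (R -> R -> R -> R) -> R -> R -> R -> R) (A : Mfield) : Prop :=
  forall x y t, O x y t ->
    (ds u x y t, ds w x y t)
    = mapp (A (u x y t) (w x y t)) (d_x u x y t, d_x w x y t).

Definition hodograph (O : R -> R -> R -> Prop) (u w : R -> R -> R -> R)
    (A B C : Mfield) : Prop :=
  forall x y t, O x y t ->
    let P := A (u x y t) (w x y t) in
    let Q := B (u x y t) (w x y t) in
    let S := C (u x y t) (w x y t) in
    x + t * e11 P + y * e11 Q = e11 S /\
    t * e12 P + y * e12 Q = e12 S /\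
    t * e21 P + y * e21 Q = e21 S /\
    x + t * e22 P + y * e22 Q = e22 S.

Definition two_phase_solution (D : R -> R -> Prop) (O : R -> R -> R -> Prop)
    (u w : R -> R -> R -> R) : Prop :=
  exists A B C : Mfield,
    C1field D A /\ C1field D B /\ C1field D C /\
    dKP_compatible D A B /\
    commuting D A B /\ commuting D A C /\ commuting D B C /\
    (forall x y t, O x y t -> D (u x y t) (w x y t)) /\
    dKP_solution O u w /\
    hydro_flow O u w d_t A /\ hydro_flow O u w d_y B /\
    hodograph O u w A B C.

Definition twice_diff (D : R -> R -> Prop) (f : R -> R -> R) : Prop :=
  forall u w, D u w ->
    ex_derive (fun s => f s w) u /\ ex_derive (fun s => f u s) w /\
    ex_derive (fun s => d_u f s w) u /\ ex_derive (fun s => d_u f u s) w /\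
    ex_derive (fun s => d_w f u s) w.

From Stdlib Require Import Reals Lra Classical.
From Coquelicot Require Import Coquelicot.
Open Scope R_scope.

(* A reduction of dKP has [B = [[0, 1], [p, q]]], and a matrix commuting with [B] has
   the form [[α, γ], [γ p, α + q γ]]; for the dKP flow [A] itself, α = u + p and γ = q.
   The commutativity of the flows, evaluated at ξ = (0, 1), gives α_w = γ_u and
   α_u + q α_w - p γ_w = 0.  Hence (p, q) and the first row (β, γ) of [C] are curl-free
   on the convex domain, the Poincaré lemma yields z and m with ∇z = (p, q) and
   ∇m = (β, γ), the second equations become the PDEs for z and m, and the first row of
   the hodograph formula becomes the pair of implicit formulae. *)

Definition partials (f : R -> R -> R) (a b fu fw : R) : Prop :=
  is_derive (fun s => f s b) a fu /\ is_derive (fun s => f a s) b fw.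

Section Partials.

Variables (f g : R -> R -> R) (a b fu fw gu gw : R).

Lemma partials_d_u : partials f a b fu fw -> d_u f a b = fu.
Proof. intros [Hu _]; now apply is_derive_unique. Qed.

Lemma partials_d_w : partials f a b fu fw -> d_w f a b = fw.
Proof. intros [_ Hw]; now apply is_derive_unique. Qed.

Lemma partials_const (c : R) : partials (fun _ _ => c) a b 0 0.
Proof. split; now auto_derive. Qed.

Lemma partials_fst : partials (fun x _ => x) a b 1 0.
Proof. split; now auto_derive. Qed.

Lemma partials_plus : partials f a b fu fw -> partials g a b gu gw ->
  partials (fun x y => f x y + g x y) a b (fu + gu) (fw + gw).
Proof.
  intros [Hfu Hfw] [Hgu Hgw]; split; now apply @is_derive_plus.
Qed.

Lemma partials_mult : partials f a b fu fw -> partials g a b gu gw ->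
  partials (fun x y => f x y * g x y) a b
    (fu * g a b + f a b * gu) (fw * g a b + f a b * gw).
Proof.
  intros [Hfu Hfw] [Hgu Hgw]; split; apply is_derive_Reals;
    apply (derivable_pt_lim_mult (fun s => f _ s) (fun s => g _ s)) ||
    apply (derivable_pt_lim_mult (fun s => f s _) (fun s => g s _));
    now apply is_derive_Reals.
Qed.

End Partials.

Lemma open2_locally_u (D : R -> R -> Prop) (a b : R) :
  open2 D -> D a b -> locally a (fun s => D s b).
Proof.
  intros HD Hab; destruct (HD a b Hab) as [e [He HDe]].
  exists (mkposreal e He); intros s Hs; apply HDe; [exact Hs|].
  now rewrite Rminus_eq_0, Rabs_R0.
Qed.

Lemma open2_locally_w (D : R -> R -> Prop) (a b : R) :
  open2 D -> D a b -> locally b (fun s => D a s).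
Proof.
  intros HD Hab; destruct (HD a b Hab) as [e [He HDe]].
  exists (mkposreal e He); intros s Hs; apply HDe; [|exact Hs].
  now rewrite Rminus_eq_0, Rabs_R0.
Qed.

Lemma partials_ext_open (D : R -> R -> Prop) (f g : R -> R -> R) (a b fu fw : R) :
  open2 D -> D a b -> (forall x y, D x y -> f x y = g x y) ->
  partials g a b fu fw -> partials f a b fu fw.
Proof.
  intros HD Hab Hfg [Hu Hw]; split; eapply is_derive_ext_loc; try eassumption.
  - destruct (open2_locally_u D a b HD Hab) as [e He].
    exists e; intros s Hs; symmetry; apply Hfg, He, Hs.
  - destruct (open2_locally_w D a b HD Hab) as [e He].
    exists e; intros s Hs; symmetry; apply Hfg, He, Hs.
Qed.

Lemma C1on_partials (D : R -> R -> Prop) (f : R -> R -> R) (a b : R) :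
  C1on D f -> D a b -> partials f a b (d_u f a b) (d_w f a b).
Proof.
  intros Hf Hab; destruct (Hf a b Hab) as [Hu [Hw _]].
  split; now apply Derive_correct.
Qed.

Lemma open2_locally_2d_comp (D : R -> R -> Prop) (f1 f2 : R -> R -> R) (x y : R) :
  open2 D -> continuity_2d_pt f1 x y -> continuity_2d_pt f2 x y -> D (f1 x y) (f2 x y) ->
  locally_2d (fun u v => D (f1 u v) (f2 u v)) x y.
Proof.
  intros HD H1 H2 Hxy; destruct (HD _ _ Hxy) as [e [He HDe]].
  destruct (H1 (mkposreal e He)) as [d1 Hd1]; destruct (H2 (mkposreal e He)) as [d2 Hd2].
  exists (mkposreal _ (Rmin_pos _ _ (cond_pos d1) (cond_pos d2))); simpl.
  intros u v Hu Hv; pose proof (Rmin_l d1 d2); pose proof (Rmin_r d1 d2).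
  apply HDe; [apply (Hd1 u v) | apply (Hd2 u v)]; lra.
Qed.

Ltac cont2 := repeat first [ apply continuity_2d_pt_plus | apply continuity_2d_pt_minus
  | apply continuity_2d_pt_mult | apply continuity_2d_pt_id1 | apply continuity_2d_pt_id2
  | apply continuity_2d_pt_const ].

Lemma continuity_2d_pt_comp (g f1 f2 : R -> R -> R) (x y : R) :
  continuity_2d_pt g (f1 x y) (f2 x y) ->
  continuity_2d_pt f1 x y -> continuity_2d_pt f2 x y ->
  continuity_2d_pt (fun a b => g (f1 a b) (f2 a b)) x y.
Proof.
  intros Hg H1 H2 eps.
  destruct (Hg eps) as [d Hd]; destruct (H1 d) as [d1 Hd1]; destruct (H2 d) as [d2 Hd2].
  exists (mkposreal _ (Rmin_pos _ _ (cond_pos d1) (cond_pos d2))); simpl.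
  intros a b Ha Hb; pose proof (Rmin_l d1 d2); pose proof (Rmin_r d1 d2).
  apply Hd; [apply Hd1 | apply Hd2]; lra.
Qed.

Lemma continuity_2d_pt_continuous_w (f : R -> R -> R) (x y : R) :
  continuity_2d_pt f x y -> continuous (fun s => f x s) y.
Proof.
  intros Hf; apply filterlim_locally; intros eps; destruct (Hf eps) as [d Hd].
  exists d; intros s Hs; apply Hd; [|exact Hs].
  rewrite Rminus_eq_0, Rabs_R0; apply cond_pos.
Qed.

Lemma continuity_2d_pt_swap (f : R -> R -> R) (x y : R) :
  continuity_2d_pt f x y -> continuity_2d_pt (fun a b => f b a) y x.
Proof. intros Hf eps; destruct (Hf eps) as [d Hd]; exists d; intros a b Ha Hb; now apply Hd. Qed.

(* Both partial increments are controlled by the mean value theorem along the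
   two sides of a rectangle, and continuity of the partials at (x, y). *)
Lemma C1on_differentiable (D : R -> R -> Prop) (f : R -> R -> R) (x y : R) :
  open2 D -> C1on D f -> D x y ->
  differentiable_pt_lim f x y (d_u f x y) (d_w f x y).
Proof.
  intros HD Hf Hxy eps.
  destruct (HD _ _ Hxy) as [e [He HDe]].
  destruct (Hf _ _ Hxy) as [_ [_ [_ [Cu Cw]]]].
  assert (He2 : 0 < eps / 2) by (destruct eps; simpl; lra).
  destruct (Cu (mkposreal _ He2)) as [d1 H1]; destruct (Cw (mkposreal _ He2)) as [d2 H2].
  assert (Hd : 0 < Rmin (e / 2) (Rmin d1 d2)).
  { apply Rmin_pos; [lra | apply Rmin_pos; apply cond_pos]. }
  exists (mkposreal _ Hd); intros u v Hu Hv; simpl in Hu, Hv, H1, H2.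
  pose proof (Rmin_l (e / 2) (Rmin d1 d2)); pose proof (Rmin_r (e / 2) (Rmin d1 d2)).
  pose proof (Rmin_l d1 d2); pose proof (Rmin_r d1 d2).
  destruct (MVT_cor4 (fun s => f s v) (fun c => d_u f c v) x (Rabs (u - x))) with (b := u)
    as [c [Hc1 Hc2]]; [|lra|].
  { intros c Hc; apply Derive_correct, (Hf c v), HDe; lra. }
  destruct (MVT_cor4 (fun s => f x s) (fun c => d_w f x c) y (Rabs (v - y))) with (b := v)
    as [c' [Hc1' Hc2']]; [|lra|].
  { intros c0 Hc; apply Derive_correct, (Hf x c0), HDe; [|lra].
    rewrite Rminus_eq_0, Rabs_R0; lra. }
  assert (E1 : Rabs (d_u f c v - d_u f x y) < eps / 2) by (apply H1; lra).
  assert (E2 : Rabs (d_w f x c' - d_w f x y) < eps / 2).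
  { apply H2; [rewrite Rminus_eq_0, Rabs_R0|]; lra. }
  replace (f u v - f x y - (d_u f x y * (u - x) + d_w f x y * (v - y))) with
    ((d_u f c v - d_u f x y) * (u - x) + (d_w f x c' - d_w f x y) * (v - y)).
  2: { replace (f u v - f x y) with ((f u v - f x v) + (f x v - f x y)) by ring.
       rewrite Hc1, Hc1'; ring. }
  eapply Rle_trans; [apply Rabs_triang|]; rewrite !Rabs_mult.
  pose proof (Rmax_l (Rabs (u - x)) (Rabs (v - y))).
  pose proof (Rmax_r (Rabs (u - x)) (Rabs (v - y))).
  pose proof (Rabs_pos (u - x)); pose proof (Rabs_pos (v - y)).
  pose proof (Rabs_pos (d_u f c v - d_u f x y)); pose proof (Rabs_pos (d_w f x c' - d_w f x y)).
  set (M := Rmax (Rabs (u - x)) (Rabs (v - y))) in *; simpl; nra.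
Qed.

Definition lerp (c x s : R) : R := c + s * (x - c).

Lemma convex2_lerp (D : R -> R -> Prop) (u0 w0 a b s : R) :
  convex2 D -> D u0 w0 -> D a b -> 0 <= s <= 1 -> D (lerp u0 a s) (lerp w0 b s).
Proof.
  intros HDc H0 Hab Hs; unfold lerp.
  replace (u0 + s * (a - u0)) with ((1 - s) * u0 + s * a) by ring.
  replace (w0 + s * (b - w0)) with ((1 - s) * w0 + s * b) by ring.
  now apply HDc.
Qed.

Lemma is_derive_lerp_u (h : R -> R -> R) (c x s w : R) :
  ex_derive (fun t => h t w) (lerp c x s) ->
  is_derive (fun y => h (lerp c y s) w) x (s * d_u h (lerp c x s) w).
Proof.
  intros Hh; apply is_derive_Reals; rewrite Rmult_comm.
  apply (derivable_pt_lim_comp (fun y => lerp c y s) (fun t => h t w)).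
  - apply is_derive_Reals; unfold lerp; auto_derive; auto; ring.
  - now apply is_derive_Reals, Derive_correct.
Qed.

Lemma is_derive_shifted_comb (P Q : R -> R) (c k x dP dQ : R) :
  is_derive P x dP -> is_derive Q x dQ ->
  is_derive (fun y => (y - c) * P y + k * Q y) x (P x + (x - c) * dP + k * dQ).
Proof.
  intros HP HQ; apply is_derive_Reals.
  replace (P x + (x - c) * dP + k * dQ)
    with ((1 * P x + (x - c) * dP) + (0 * Q x + k * dQ)) by ring.
  apply (derivable_pt_lim_plus (fun y => (y - c) * P y) (fun y => k * Q y)).
  - apply (derivable_pt_lim_mult (fun y => y - c) P); [|now apply is_derive_Reals].
    apply is_derive_Reals; auto_derive; auto; ring.
  - apply (derivable_pt_lim_mult (fun _ => k) Q); [|now apply is_derive_Reals].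
    apply derivable_pt_lim_const.
Qed.

Definition radial_potential (p q : R -> R -> R) (u0 w0 a b : R) : R :=
  RInt (fun s => (a - u0) * p (lerp u0 a s) (lerp w0 b s)
               + (b - w0) * q (lerp u0 a s) (lerp w0 b s)) 0 1.

Section RadialPotential.

Variables (D : R -> R -> Prop) (p q : R -> R -> R) (u0 w0 : R).
Hypotheses (HDo : open2 D) (HDc : convex2 D) (HD0 : D u0 w0)
  (Cp : C1on D p) (Cq : C1on D q)
  (Hcurl : forall a b, D a b -> d_w p a b = d_u q a b).

Let F (b x s : R) : R :=
  (x - u0) * p (lerp u0 x s) (lerp w0 b s) + (b - w0) * q (lerp u0 x s) (lerp w0 b s).

Let G (b x s : R) : R :=
  p (lerp u0 x s) (lerp w0 b s)
  + s * ((x - u0) * d_u p (lerp u0 x s) (lerp w0 b s)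
         + (b - w0) * d_u q (lerp u0 x s) (lerp w0 b s)).

Lemma continuity_2d_pt_along_lerp (h : R -> R -> R) (b x s : R) :
  (forall a b, D a b -> continuity_2d_pt h a b) -> D (lerp u0 x s) (lerp w0 b s) ->
  continuity_2d_pt (fun x s => h (lerp u0 x s) (lerp w0 b s)) x s.
Proof.
  intros Hh Hxs; apply (continuity_2d_pt_comp h); [now apply Hh | |]; unfold lerp; cont2.
Qed.

Lemma is_derive_radial_integrand (b x s : R) :
  D (lerp u0 x s) (lerp w0 b s) -> is_derive (fun y => F b y s) x (G b x s).
Proof.
  intros Hxs; unfold F, G.
  replace (s * ((x - u0) * d_u p (lerp u0 x s) (lerp w0 b s)
                + (b - w0) * d_u q (lerp u0 x s) (lerp w0 b s)))
    with ((x - u0) * (s * d_u p (lerp u0 x s) (lerp w0 b s))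
          + (b - w0) * (s * d_u q (lerp u0 x s) (lerp w0 b s))) by ring.
  rewrite <- Rplus_assoc.
  apply (is_derive_shifted_comb (fun y => p (lerp u0 y s) (lerp w0 b s))
                               (fun y => q (lerp u0 y s) (lerp w0 b s)));
    apply is_derive_lerp_u; [apply (Cp _ _ Hxs) | apply (Cq _ _ Hxs)].
Qed.

Lemma continuity_radial_integrand (b x s : R) :
  D (lerp u0 x s) (lerp w0 b s) ->
  continuity_2d_pt (F b) x s /\ continuity_2d_pt (G b) x s.
Proof.
  intros Hxs; unfold F, G; split; cont2; apply continuity_2d_pt_along_lerp; auto;
    intros a' b' Hab'; apply (Cp a' b' Hab') || apply (Cq a' b' Hab').
Qed.

(* The curl condition turns the x-derivative of the integrand into an exact s-derivative. *)
Lemma is_derive_radial_integrand_exact (a b s : R) :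
  D (lerp u0 a s) (lerp w0 b s) ->
  is_derive (fun s => s * p (lerp u0 a s) (lerp w0 b s)) s (G b a s).
Proof.
  intros Has; unfold G; rewrite <- (Hcurl _ _ Has).
  apply is_derive_Reals.
  replace (p (lerp u0 a s) (lerp w0 b s)
           + s * ((a - u0) * d_u p (lerp u0 a s) (lerp w0 b s)
                  + (b - w0) * d_w p (lerp u0 a s) (lerp w0 b s)))
    with (1 * p (lerp u0 a s) (lerp w0 b s)
          + s * (d_u p (lerp u0 a s) (lerp w0 b s) * (a - u0)
                 + d_w p (lerp u0 a s) (lerp w0 b s) * (b - w0))) by ring.
  apply (derivable_pt_lim_mult (fun s => s) (fun s => p (lerp u0 a s) (lerp w0 b s))).
  - apply derivable_pt_lim_id.
  - apply derivable_pt_lim_comp_2d; [now apply (C1on_differentiable D)| |];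
      apply is_derive_Reals; unfold lerp; auto_derive; auto; ring.
Qed.

Lemma is_derive_radial_potential_param (a b : R) :
  D a b -> is_derive (fun x => radial_potential p q u0 w0 x b) a (RInt (G b a) 0 1).
Proof.
  intros Hab.
  assert (Hseg : forall x s, D x b -> 0 <= s <= 1 -> D (lerp u0 x s) (lerp w0 b s))
    by (intros; now apply convex2_lerp).
  destruct (open2_locally_u D a b HDo Hab) as [e He].
  replace (RInt (G b a) 0 1) with (RInt (fun s => Derive (fun y => F b y s) a) 0 1).
  2: { apply RInt_ext; intros s Hs; rewrite Rmin_left, Rmax_right in Hs by lra.
       apply is_derive_unique, is_derive_radial_integrand, Hseg; [exact Hab | lra]. }
  apply (is_derive_RInt_param (F b)); rewrite ?Rmin_left, ?Rmax_right by lra.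
  - exists e; intros x Hx s Hs; eexists.
    apply is_derive_radial_integrand, Hseg; auto.
  - intros s Hs; apply continuity_2d_pt_ext_loc with (f := G b).
    + eapply locally_2d_impl;
        [| apply (open2_locally_2d_comp D (fun x s => lerp u0 x s) (fun _ s => lerp w0 b s));
           [exact HDo | unfold lerp; cont2 | unfold lerp; cont2 | now apply Hseg]].
      apply locally_2d_forall; intros x t Hxt; symmetry.
      now apply is_derive_unique, is_derive_radial_integrand.
    + now apply continuity_radial_integrand, Hseg.
  - exists e; intros x Hx; apply (@ex_RInt_continuous R_CompleteNormedModule).
    intros s Hs; rewrite Rmin_left, Rmax_right in Hs by lra.
    apply continuity_2d_pt_continuous_w, continuity_radial_integrand, Hseg; auto.
Qed.

Lemma is_derive_radial_potential_u (a b : R) :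
  D a b -> is_derive (fun x => radial_potential p q u0 w0 x b) a (p a b).
Proof.
  intros Hab.
  replace (p a b) with (RInt (G b a) 0 1); [now apply is_derive_radial_potential_param|].
  assert (HFTC : is_RInt (G b a) 0 1
    (minus (1 * p (lerp u0 a 1) (lerp w0 b 1)) (0 * p (lerp u0 a 0) (lerp w0 b 0)))).
  { apply (@is_RInt_derive R_CompleteNormedModule (fun s => s * p (lerp u0 a s) (lerp w0 b s)));
      intros s Hs; rewrite Rmin_left, Rmax_right in Hs by lra;
      assert (Has : D (lerp u0 a s) (lerp w0 b s)) by now apply convex2_lerp.
    - now apply is_derive_radial_integrand_exact.
    - now apply continuity_2d_pt_continuous_w, continuity_radial_integrand. }
  rewrite (is_RInt_unique _ _ _ _ HFTC); unfold lerp; cbn.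
  replace (u0 + 1 * (a - u0)) with a by ring; replace (w0 + 1 * (b - w0)) with b by ring.
  ring.
Qed.

End RadialPotential.

Definition is_potential (D : R -> R -> Prop) (p q z : R -> R -> R) : Prop :=
  forall a b, D a b -> partials z a b (p a b) (q a b).

Lemma open2_swap (D : R -> R -> Prop) : open2 D -> open2 (fun x y => D y x).
Proof.
  intros HD x y Hxy; destruct (HD y x Hxy) as [e [He HDe]].
  exists e; split; [exact He|]; intros x' y' Hx Hy; now apply HDe.
Qed.

Lemma convex2_swap (D : R -> R -> Prop) : convex2 D -> convex2 (fun x y => D y x).
Proof. intros HD u1 w1 u2 w2 s H1 H2 Hs; now apply HD. Qed.

Lemma C1on_swap (D : R -> R -> Prop) (f : R -> R -> R) :
  C1on D f -> C1on (fun x y => D y x) (fun x y => f y x).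
Proof.
  intros Hf x y Hxy; destruct (Hf y x Hxy) as [Hu [Hw [Hc [Hcu Hcw]]]].
  repeat split; try assumption; now apply continuity_2d_pt_swap.
Qed.

Lemma poincare_lemma (D : R -> R -> Prop) (p q : R -> R -> R) :
  open2 D -> convex2 D -> C1on D p -> C1on D q ->
  (forall a b, D a b -> d_w p a b = d_u q a b) ->
  exists z, is_potential D p q z.
Proof.
  intros HDo HDc Cp Cq Hcurl.
  destruct (classic (exists u0 w0, D u0 w0)) as [[u0 [w0 HD0]] | Hempty].
  2: { exists (fun _ _ => 0); intros a b Hab; exfalso; apply Hempty; eauto. }
  exists (radial_potential p q u0 w0); intros a b Hab; split.
  - apply is_derive_radial_potential_u with D; assumption.
  (* The w-derivative is the u-derivative of the potential of the transposed field. *)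
  - apply (is_derive_ext (fun y => radial_potential (fun x y => q y x) (fun x y => p y x) w0 u0 y a)).
    + intros y; unfold radial_potential; apply RInt_ext; intros s _.
      match goal with |- ?l = ?r => change (@eq R l r) end; ring.
    + refine (is_derive_radial_potential_u (fun x y => D y x) (fun x y => q y x) (fun x y => p y x)
        w0 u0 (open2_swap D HDo) (convex2_swap D HDc) HD0 (C1on_swap D q Cq) (C1on_swap D p Cp)
        _ b a Hab).
      intros x y Hxy; symmetry; apply (Hcurl y x Hxy).
Qed.

Lemma is_potential_partials_d_u (D : R -> R -> Prop) (p q z : R -> R -> R) (a b : R) :
  open2 D -> C1on D p -> is_potential D p q z -> D a b ->
  partials (d_u z) a b (d_u p a b) (d_w p a b).
Proof.
  intros HD Cp Hz Hab; apply (partials_ext_open D _ p); auto.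
  - intros x y Hxy; now apply partials_d_u with (q x y), Hz.
  - now apply C1on_partials with D.
Qed.

Lemma is_potential_partials_d_w (D : R -> R -> Prop) (p q z : R -> R -> R) (a b : R) :
  open2 D -> C1on D q -> is_potential D p q z -> D a b ->
  partials (d_w z) a b (d_u q a b) (d_w q a b).
Proof.
  intros HD Cq Hz Hab; apply (partials_ext_open D _ q); auto.
  - intros x y Hxy; now apply partials_d_w with (p x y), Hz.
  - now apply C1on_partials with D.
Qed.

Lemma is_potential_twice_diff (D : R -> R -> Prop) (p q z : R -> R -> R) :
  open2 D -> C1on D p -> C1on D q -> is_potential D p q z -> twice_diff D z.
Proof.
  intros HD Cp Cq Hz a b Hab.
  destruct (Hz a b Hab) as [Hu Hw].
  destruct (is_potential_partials_d_u D p q z a b HD Cp Hz Hab) as [Huu Huw].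
  destruct (is_potential_partials_d_w D p q z a b HD Cq Hz Hab) as [_ Hww].
  repeat split; eexists; eassumption.
Qed.

Lemma commuting_sym (D : R -> R -> Prop) (M N : Mfield) :
  commuting D M N -> commuting D N M.
Proof.
  intros HMN a b Hab; destruct (HMN a b Hab) as [Hmul Hder].
  split; [now symmetry|]; intros xi; now symmetry.
Qed.

Lemma dKP_commutant_shape (M B : M2) :
  e11 B = 0 -> e12 B = 1 -> mmul M B = mmul B M ->
  e21 M = e12 M * e21 B /\ e22 M = e11 M + e22 B * e12 M.
Proof.
  intros H11 H12 HMB.
  pose proof (f_equal e11 HMB) as E11; pose proof (f_equal e12 HMB) as E12.
  simpl in E11, E12; rewrite H11, H12 in E11, E12; split; lra.
Qed.

(* Only the direction xi = (0, 1) of the commutation identity is needed: its first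
   component is the curl condition, its second one the second-order PDE. *)
Lemma commuting_dKP_curl (D : R -> R -> Prop) (M B : Mfield)
    (alpha gamma : R -> R -> R) (a b au aw gu gw qu qw : R) :
  open2 D ->
  (forall x y, D x y -> e11 (B x y) = 0 /\ e12 (B x y) = 1) ->
  (forall x y, D x y -> e11 (M x y) = alpha x y /\ e12 (M x y) = gamma x y) ->
  commuting D M B -> D a b ->
  partials alpha a b au aw -> partials gamma a b gu gw ->
  partials (fun x y => e22 (B x y)) a b qu qw ->
  aw = gu /\ au + e22 (B a b) * aw - e21 (B a b) * gw = 0.
Proof.
  intros HD HB HM HMB Hab Pa Pg Pq.
  assert (M22 : forall x y, D x y ->
      e22 (M x y) = alpha x y + e22 (B x y) * gamma x y).
  { intros x y Hxy; destruct (HB x y Hxy) as [B11 B12].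
    destruct (HM x y Hxy) as [M11 M12]; rewrite <- M11, <- M12.
    apply (dKP_commutant_shape _ _ B11 B12), (HMB x y Hxy). }
  assert (PM12 : partials (fun x y => e12 (M x y)) a b gu gw).
  { apply (partials_ext_open D _ gamma); auto; apply HM. }
  assert (PM22 : partials (fun x y => e22 (M x y)) a b
      (au + (qu * gamma a b + e22 (B a b) * gu))
      (aw + (qw * gamma a b + e22 (B a b) * gw))).
  { apply (partials_ext_open D _ _ a b _ _ HD Hab M22).
    apply partials_plus; [exact Pa|]; now apply partials_mult. }
  assert (PB12 : partials (fun x y => e12 (B x y)) a b 0 0).
  { apply (partials_ext_open D _ (fun _ _ => 1)); auto.
    - apply HB.
    - apply partials_const. }
  destruct (HMB a b Hab) as [_ Hder]; specialize (Hder (0, 1)).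
  unfold vadd, mapp, ddir in Hder; cbn [fst snd e11 e12 e21 e22] in Hder.
  injection Hder as E1 E2.
  rewrite (partials_d_u _ _ _ _ _ PM12), (partials_d_w _ _ _ _ _ PM12),
    (partials_d_u _ _ _ _ _ PM22), (partials_d_w _ _ _ _ _ PM22),
    (partials_d_u _ _ _ _ _ PB12), (partials_d_w _ _ _ _ _ PB12),
    (partials_d_u _ _ _ _ _ Pq), (partials_d_w _ _ _ _ _ Pq) in E1, E2.
  destruct (HB a b Hab) as [B11 B12]; destruct (HM a b Hab) as [M11 M12].
  rewrite (M22 a b Hab), B11, B12, M11, M12 in E1, E2.
  assert (Hcurl : aw = gu) by lra.
  split; [exact Hcurl|]; rewrite Hcurl; lra.
Qed.

Lemma dKP_reduction_curl (D : R -> R -> Prop) (A B : Mfield) (a b : R) :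
  open2 D -> C1on D (fun x y => e21 (B x y)) -> C1on D (fun x y => e22 (B x y)) ->
  dKP_compatible D A B -> commuting D A B -> D a b ->
  d_w (fun x y => e21 (B x y)) a b = d_u (fun x y => e22 (B x y)) a b /\
  d_u (fun x y => e21 (B x y)) a b + e22 (B a b) * d_w (fun x y => e21 (B x y)) a b
    - e21 (B a b) * d_w (fun x y => e22 (B x y)) a b + 1 = 0.
Proof.
  intros HD Cp Cq HAB cAB Hab.
  destruct (commuting_dKP_curl D A B (fun x y => x + e21 (B x y)) (fun x y => e22 (B x y))
    a b (1 + d_u (fun x y => e21 (B x y)) a b) (0 + d_w (fun x y => e21 (B x y)) a b)
    (d_u (fun x y => e22 (B x y)) a b) (d_w (fun x y => e22 (B x y)) a b)
    (d_u (fun x y => e22 (B x y)) a b) (d_w (fun x y => e22 (B x y)) a b))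
    as [Hcurl Heq]; auto.
  - intros x y Hxy; destruct (HAB x y Hxy) as [? [? _]]; auto.
  - intros x y Hxy; destruct (HAB x y Hxy) as [_ [_ ?]]; auto.
  - apply partials_plus; [apply partials_fst | now apply C1on_partials with D].
  - now apply C1on_partials with D.
  - now apply C1on_partials with D.
  - split; lra.
Qed.

Lemma dKP_commuting_flow_curl (D : R -> R -> Prop) (A B C : Mfield) (a b : R) :
  open2 D -> C1on D (fun x y => e22 (B x y)) ->
  C1on D (fun x y => e11 (C x y)) -> C1on D (fun x y => e12 (C x y)) ->
  dKP_compatible D A B -> commuting D B C -> D a b ->
  d_w (fun x y => e11 (C x y)) a b = d_u (fun x y => e12 (C x y)) a b /\
  d_u (fun x y => e11 (C x y)) a b + e22 (B a b) * d_w (fun x y => e11 (C x y)) a b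
    - e21 (B a b) * d_w (fun x y => e12 (C x y)) a b = 0.
Proof.
  intros HD Cq Cb Cg HAB cBC Hab.
  apply (commuting_dKP_curl D C B (fun x y => e11 (C x y)) (fun x y => e12 (C x y))
    a b _ _ _ _ (d_u (fun x y => e22 (B x y)) a b) (d_w (fun x y => e22 (B x y)) a b));
    try assumption.
  - intros x y Hxy; destruct (HAB x y Hxy) as [? [? _]]; auto.
  - intros x y Hxy; auto.
  - exact (commuting_sym D B C cBC).
  - exact (C1on_partials D _ a b Cb Hab).
  - exact (C1on_partials D _ a b Cg Hab).
  - exact (C1on_partials D _ a b Cq Hab).
Qed.

Theorem proposition1 (D : R -> R -> Prop) (O : R -> R -> R -> Prop)
    (u w : R -> R -> R -> R) :
  open2 D -> convex2 D -> open3 O ->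
  two_phase_solution D O u w ->
  exists z m : R -> R -> R,
    twice_diff D z /\ twice_diff D m /\
    (forall a b, D a b ->
       d_u (d_u z) a b + d_w z a b * d_w (d_u z) a b
         - d_u z a b * d_w (d_w z) a b + 1 = 0 /\
       d_u (d_u m) a b + d_w z a b * d_w (d_u m) a b
         - d_u z a b * d_w (d_w m) a b = 0) /\
    (forall x y t, O x y t ->
       x + (d_u z (u x y t) (w x y t) + u x y t) * t = d_u m (u x y t) (w x y t) /\
       y + d_w z (u x y t) (w x y t) * t = d_w m (u x y t) (w x y t)).
Proof.
  intros HDo HDc _ [A [B [C [_ [[_ [_ [Cp Cq]]] [[Cb [Cg _]] [HAB [cAB [_ [cBC
    [HOD [_ [_ [_ Hhod]]]]]]]]]]]]]].
  pose proof (fun a b => dKP_reduction_curl D A B a b HDo Cp Cq HAB cAB) as KB.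
  pose proof (fun a b => dKP_commuting_flow_curl D A B C a b HDo Cq Cb Cg HAB cBC) as KC.
  destruct (poincare_lemma D _ _ HDo HDc Cp Cq (fun a b H => proj1 (KB a b H))) as [z Hz].
  destruct (poincare_lemma D _ _ HDo HDc Cb Cg (fun a b H => proj1 (KC a b H))) as [m Hm].
  exists z, m; split; [|split; [|split]].
  - exact (is_potential_twice_diff D _ _ z HDo Cp Cq Hz).
  - exact (is_potential_twice_diff D _ _ m HDo Cb Cg Hm).
  - intros a b Hab.
    pose proof (is_potential_partials_d_u D _ _ z a b HDo Cp Hz Hab) as Pzu.
    pose proof (is_potential_partials_d_w D _ _ z a b HDo Cq Hz Hab) as Pzw.
    pose proof (is_potential_partials_d_u D _ _ m a b HDo Cb Hm Hab) as Pmu.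
    pose proof (is_potential_partials_d_w D _ _ m a b HDo Cg Hm Hab) as Pmw.
    rewrite (partials_d_u _ _ _ _ _ Pzu), (partials_d_w _ _ _ _ _ Pzu),
      (partials_d_w _ _ _ _ _ Pzw), (partials_d_u _ _ _ _ _ Pmu),
      (partials_d_w _ _ _ _ _ Pmu), (partials_d_w _ _ _ _ _ Pmw),
      (partials_d_u _ _ _ _ _ (Hz a b Hab)), (partials_d_w _ _ _ _ _ (Hz a b Hab)).
    destruct (KB a b Hab) as [_ HzPDE]; destruct (KC a b Hab) as [_ HmPDE]; split; lra.
  - intros x y t HO; pose proof (HOD x y t HO) as HD.
    rewrite (partials_d_u _ _ _ _ _ (Hz _ _ HD)), (partials_d_w _ _ _ _ _ (Hz _ _ HD)),
      (partials_d_u _ _ _ _ _ (Hm _ _ HD)), (partials_d_w _ _ _ _ _ (Hm _ _ HD)).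
    destruct (Hhod x y t HO) as [H1 [H2 _]]; destruct (HAB _ _ HD) as [B11 [B12 [A11 A12]]].
    rewrite B11, B12, A11, A12 in *; split; [rewrite <- H1 | rewrite <- H2]; ring.
Qed.
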